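(* Let $\mathbf A$ be a finite subdirectly irreducible cBCK-algebra that is not a chain. Then the smallest set generating $\mathbf A$ is $\mathrm{m}(\mathbf A)$ (i.e., $\mathrm{m}(\mathbf A)$ generates $\mathbf A$) if and only if $\mathcal S_\delta(\mathbf A)=\emptyset$.
   Context: A BCK-algebra is an algebra $(A,\ominus,0)$ of type $(2,0)$ satisfying $((x\ominus y)\ominus(x\ominus z))\ominus(z\ominus y)=0$, $x\ominus 0=x$, $0\ominus x=0$, and ($x\ominus y=0$ and $y\ominus x=0$ imply $x=y$); it is ordered by $x\le y$ iff $x\ominus y=0$. A cBCK-algebra is a BCK-algebra satisfying $x\ominus(x\ominus y)=y\ominus(y\ominus x)$; its order is a meet-semilattice with $x\wedge y=x\ominus(x\ominus y)$. Finite subdirectly irreducible cBCK-algebras are, as posets, rooted trees with root $0$. For $a\in A$, $\mathrm{h}(a)=|[0,a]|-1$; $n=\mathrm{h}(\mathbf A)$ is the maximum height. $\mathrm{m}(\mathbf A)$ is the set of maximal elements. For $k$ a divisor of $n$ with $k\ne 1,n$, put $A_k=\{x\in A\mid k \text{ divides } \mathrm{h}(x)\}$; $\mathcal S_\delta(\mathbf A)$ is the set of subalgebras of $\mathbf A$ whose universe is of the form $A_k\cup\mathrm{m}(\mathbf A)$ for such a $k$. *)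

From mathcomp Require Import all_boot.
Set Implicit Arguments. Unset Strict Implicit. Unset Printing Implicit Defensive.

Section BCK.
Variables (T : finType) (sub : T -> T -> T) (z : T).

Definition is_BCK : Prop :=
  [/\ (forall x y w, sub (sub (sub x y) (sub x w)) (sub w y) = z),
      (forall x, sub x z = x),
      (forall x, sub z x = z) &
      (forall x y, sub x y = z -> sub y x = z -> x = y)].

Definition is_cBCK : Prop :=
  is_BCK /\ forall x y, sub x (sub x y) = sub y (sub y x).

Definition bck_le (x y : T) : bool := sub x y == z.

(* congruences of the algebra (0 is a constant, so compatibility with 0 is trivial) *)
Definition is_congruence (theta : T -> T -> Prop) : Prop :=
  [/\ (forall x, theta x x),
      (forall x y, theta x y -> theta y x),
      (forall x y w, theta x y -> theta y w -> theta x w) &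
      (forall x x' y y', theta x x' -> theta y y' -> theta (sub x y) (sub x' y'))].

Definition nontrivial_rel (theta : T -> T -> Prop) : Prop :=
  exists x y, x <> y /\ theta x y.

(* subdirectly irreducible: the intersection of all congruences different from
   the identity congruence is itself different from the identity congruence *)
Definition subdirectly_irreducible : Prop :=
  exists a b : T, a <> b /\
    forall theta, is_congruence theta -> nontrivial_rel theta -> theta a b.

Definition is_chain : Prop := forall x y, bck_le x y \/ bck_le y x.

Definition max_elems : {set T} :=
  [set x | [forall y, bck_le x y ==> (y == x)]].

Definition height (a : T) : nat := #|[set y | bck_le z y && bck_le y a]|.-1.

Definition alg_height : nat := \max_(a : T) height a.

Definition subuniverse (X : {set T}) : Prop :=
  z \in X /\ forall x y, x \in X -> y \in X -> sub x y \in X.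

Definition generates (X : {set T}) : Prop :=
  forall Y : {set T}, subuniverse Y -> X \subset Y -> Y = [set: T].

Definition A_k (k : nat) : {set T} := [set x | k %| height x].

Definition in_S_delta (X : {set T}) : Prop :=
  exists k : nat, [/\ k %| alg_height, k <> 1, k <> alg_height,
                      X = A_k k :|: max_elems & subuniverse X].

Definition S_delta_empty : Prop := forall X : {set T}, ~ in_S_delta X.
End BCK.

(* In a subdirectly irreducible cBCK-algebra the meet of two nonzero elements
   is nonzero, since the monolith lies in every nonzero polar.  Hence in the
   finite case every downset is a chain, and h(x ⊖ t) + h(t) = h(x) for t ≤ x.
   If Y is a proper subalgebra containing m(A) and e is a nonzero element of Y
   of least height, then e lies below every nonzero element of Y, and walking
   down in steps of e shows Y = A_h(e) ∪ m(A); here h(e) ≠ 1 as Y is proper,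
   and h(e) ≠ n since h(e) divides h(a ⊖ b) ∈ (0, n) for distinct maximal
   a, b.  Conversely, if m(A) generates A then a subalgebra A_k ∪ m(A) is all
   of A, so it contains the non-maximal atom below a ∧ b, forcing k = 1. *)

From Pilot Require Import Defs.
From mathcomp Require Import all_boot zify.
Set Implicit Arguments. Unset Strict Implicit. Unset Printing Implicit Defensive.

Lemma dvdn_eq_ltn_add d m n : d %| m -> d %| n -> m <= n -> n < m + d -> m = n.
Proof.
move=> dm dn mn nmd; have := dvdn_sub dn dm.
by case: (posnP (n - m)) => [|pos /(dvdn_leq pos)]; lia.
Qed.

Section BCKAlgebra.
Variables (T : finType) (sub : T -> T -> T) (z : T).
Hypothesis bckA : is_BCK sub z.
Local Notation "x ⊖ y" := (sub x y) (at level 50, left associativity).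
Local Notation "x ≼ y" := (x ⊖ y = z) (at level 70).
Local Notation height := (height sub z).

Lemma le_subsub x y w : (x ⊖ y) ⊖ (x ⊖ w) ≼ w ⊖ y.
Proof. by case: bckA. Qed.

Lemma subx0 x : x ⊖ z = x.
Proof. by case: bckA. Qed.

Lemma le0x x : z ≼ x.
Proof. by case: bckA. Qed.

Lemma le_anti x y : x ≼ y -> y ≼ x -> x = y.
Proof. by case: bckA => _ _ _; apply. Qed.

Lemma lexx x : x ≼ x.
Proof. by have := le_subsub x z z; rewrite !subx0. Qed.

Lemma le_trans x y w : x ≼ y -> y ≼ w -> x ≼ w.
Proof. by move=> xy yw; have := le_subsub x w y; rewrite xy yw !subx0. Qed.

Lemma le_subl x y : x ⊖ y ≼ x.
Proof. by have := le_subsub x y z; rewrite subx0 le0x subx0. Qed.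

Lemma le_sub2l x y w : y ≼ w -> x ⊖ w ≼ x ⊖ y.
Proof. by move=> yw; have := le_subsub x w y; rewrite yw subx0. Qed.

Lemma le_sub2r x y w : x ≼ y -> x ⊖ w ≼ y ⊖ w.
Proof. by move=> xy; have := le_subsub x w y; rewrite xy subx0. Qed.

Lemma subAC x y w : (x ⊖ y) ⊖ w = (x ⊖ w) ⊖ y.
Proof.
have le_AC x' y' w' : (x' ⊖ y') ⊖ w' ≼ (x' ⊖ w') ⊖ y'.
  apply: le_trans (le_subsub x' y' (x' ⊖ w')); apply: le_sub2l.
  by have := le_subsub x' z w'; rewrite !subx0.
by apply: le_anti; apply: le_AC.
Qed.

Definition ideal (I : {set T}) :=
  z \in I /\ forall x y, x ⊖ y \in I -> y \in I -> x \in I.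

Lemma ideal_le I x y : ideal I -> x ≼ y -> y \in I -> x \in I.
Proof. by case=> I0 Icl xy; apply: Icl; rewrite xy. Qed.

Lemma ideal_sub_trans I x y w : ideal I -> x ⊖ y \in I -> y ⊖ w \in I -> x ⊖ w \in I.
Proof.
move=> idI xy yw; apply: idI.2 xy; apply: ideal_le idI _ yw; exact: le_subsub.
Qed.

Definition ideal_rel (I : {set T}) x y := x ⊖ y \in I /\ y ⊖ x \in I.

Lemma ideal_rel_congruence I : ideal I -> is_congruence sub (ideal_rel I).
Proof.
move=> idI; have I0 := idI.1.
have sub_compat x x' y y' : x ⊖ x' \in I -> y' ⊖ y \in I -> (x ⊖ y) ⊖ (x' ⊖ y') \in I.
  move=> xx' y'y; apply: (@ideal_sub_trans _ _ (x' ⊖ y)) => //.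
    by apply: ideal_le idI _ xx'; rewrite subAC le_subsub.
  by apply: ideal_le idI _ y'y; apply: le_subsub.
split.
- by move=> x; rewrite /ideal_rel lexx.
- by move=> x y [].
- move=> x y w [xy yx] [yw wy].
  by split; [exact: ideal_sub_trans idI xy yw | exact: ideal_sub_trans idI wy yx].
- by move=> x x' y y' [xx' x'x] [yy' y'y]; split; apply: sub_compat.
Qed.

Lemma ideal_monolith : subdirectly_irreducible sub ->
  exists2 r, r <> z & forall I, ideal I -> (exists2 e, e \in I & e <> z) -> r \in I.
Proof.
case=> a [b [ab si]].
exists (if a ⊖ b == z then b ⊖ a else a ⊖ b).
  by case: eqP => [abz baz | //]; apply: ab; apply: le_anti.
move=> I idI [e eI e0].
have [abI baI] : ideal_rel I a b.
  apply: si; first exact: ideal_rel_congruence.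
  by exists e, z; split=> //; split; rewrite ?subx0 ?le0x //; case: idI.
by case: eqP.
Qed.

Definition downset x := [set y | y ⊖ x == z].

Lemma heightE x : height x = #|downset x|.-1.
Proof.
by rewrite /Defs.height; congr _.-1; apply: eq_card => y; rewrite !inE /bck_le le0x eqxx.
Qed.

Lemma card_downset_gt0 x : 0 < #|downset x|.
Proof. by apply/card_gt0P; exists z; rewrite inE le0x. Qed.

Lemma height_lt x y : x ≼ y -> x <> y -> height x < height y.
Proof.
move=> xy x_y; rewrite !heightE.
suff : #|downset x| < #|downset y| by have := card_downset_gt0 x; lia.
apply: proper_card; apply/properP; split.
  by apply/subsetP=> s; rewrite !inE => /eqP sx; apply/eqP; apply: le_trans sx xy.
by exists y; rewrite inE ?lexx //; apply/eqP=> yx; apply: x_y; apply: le_anti.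
Qed.

Lemma height_le x y : x ≼ y -> height x <= height y.
Proof.
move=> xy; have [->//|/eqP x_y] := eqVneq x y.
exact/ltnW/(height_lt xy x_y).
Qed.

Lemma le_height_eq x y : x ≼ y -> height x = height y -> x = y.
Proof.
move=> xy hxy; have [//|/eqP x_y] := eqVneq x y.
by have := height_lt xy x_y; rewrite hxy ltnn.
Qed.

Lemma height0 : height z = 0.
Proof.
rewrite heightE (_ : downset z = [set z]) ?cards1 //.
by apply/setP=> y; rewrite !inE subx0.
Qed.

Lemma height_gt0 x : x <> z -> 0 < height x.
Proof. by move=> x0; rewrite -height0 height_lt ?le0x //; move/esym. Qed.

Lemma max_elemsP x : reflect (forall y, x ≼ y -> y = x) (x \in max_elems sub z).
Proof.
rewrite inE; apply: (iffP forallP) => [xmax y xy | xmax y].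
  by have /implyP/(_ _)/eqP := xmax y; apply; apply/eqP.
by apply/implyP=> /eqP/xmax ->.
Qed.

Lemma height_max_elems a :
  (forall y, a ≼ y -> height y <= height a) -> a \in max_elems sub z.
Proof.
move=> amax; apply/max_elemsP=> y ay; apply/esym/(le_height_eq ay)/eqP.
by rewrite eqn_leq height_le ?amax.
Qed.

Lemma exists_max_ge x : exists2 a, a \in max_elems sub z & x ≼ a.
Proof.
have xx : x \in [pred v | x ⊖ v == z] by rewrite inE lexx.
case: (arg_maxnP height xx) => a /eqP xa amax; exists a => //.
by apply: height_max_elems => y ay; apply: amax; apply/eqP/(le_trans xa ay).
Qed.

Lemma exists_max_height : exists2 a, a \in max_elems sub z & height a = alg_height sub z.
Proof.
have [a _ amax] := arg_maxnP height (isT : predT z).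
exists a; first by apply: height_max_elems => y _; apply: amax.
apply/eqP; rewrite eqn_leq /alg_height leq_bigmax /=.
by apply/bigmax_leqP=> i _; apply: amax.
Qed.

Definition lower_cover c x :=
  [/\ c ≼ x, x <> c & forall v, c ≼ v -> v ≼ x -> v = c \/ v = x].
Local Notation atom t := (lower_cover z t).

Lemma exists_lower_cover s x : s ≼ x -> s <> x -> exists2 c, lower_cover c x & s ≼ c.
Proof.
move=> sx s_x.
have sP : s \in [pred v | [&& s ⊖ v == z, v ⊖ x == z & x != v]].
  by rewrite inE lexx sx eqxx; apply/eqP=> /esym.
case: (arg_maxnP height sP) => c /and3P[/eqP sc /eqP cx /eqP c_x] cmax.
exists c => //; split=> // v cv vx.
have [->|/eqP x_v] := eqVneq x v; [by right | left].
apply/esym/(le_height_eq cv)/eqP; rewrite eqn_leq height_le //=; apply: cmax.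
by rewrite /= (le_trans sc cv) vx !eqxx; apply/eqP.
Qed.

Lemma exists_atom_le x : x <> z -> exists2 t, atom t & t ≼ x.
Proof.
move=> x0.
have xP : x \in [pred v | (v != z) && (v ⊖ x == z)] by rewrite inE lexx eqxx andbT; apply/eqP.
case: (arg_minnP height xP) => t /andP[/eqP t0 /eqP tx] tmin.
exists t => //; split=> // [|v _ vt]; first exact: le0x.
have [->|/eqP v0] := eqVneq v z; [by left | right].
apply/(le_height_eq vt)/eqP; rewrite eqn_leq height_le //=; apply: tmin.
by rewrite /= (le_trans vt tx) eqxx andbT; apply/eqP.
Qed.

Lemma height_atom t : atom t -> height t = 1.
Proof.
case=> _ t0 tcov; rewrite heightE.
have -> : downset t = [set z; t].
  apply/setP=> s; rewrite !inE; apply/idP/idP => [/eqP st | /orP[] /eqP ->].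
  - by case: (tcov s (le0x s) st) => ->; rewrite eqxx ?orbT.
  - by rewrite le0x.
  - by rewrite lexx.
by rewrite cards2; case: eqP => // /esym.
Qed.

Section Commutative.
Hypothesis commA : forall x y, x ⊖ (x ⊖ y) = y ⊖ (y ⊖ x).
Local Notation "x ⊓ y" := (x ⊖ (x ⊖ y)) (at level 40, left associativity).

Lemma meetC x y : x ⊓ y = y ⊓ x.
Proof. exact: commA. Qed.

Lemma leIl x y : x ⊓ y ≼ x.
Proof. exact: le_subl. Qed.

Lemma leIr x y : x ⊓ y ≼ y.
Proof. by rewrite meetC; apply: leIl. Qed.

Lemma meet_r x y : y ≼ x -> x ⊓ y = y.
Proof. by move=> yx; rewrite meetC yx subx0. Qed.

Lemma lexI x y w : w ≼ x -> w ≼ y -> w ≼ x ⊓ y.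
Proof. by move=> wx wy; rewrite -[w in w ⊖ _](meet_r wx); do 2!apply: le_sub2l. Qed.

Definition polar e := [set x | x ⊓ e == z].

Lemma polar_ideal e : ideal (polar e).
Proof.
split=> [|x y]; first by rewrite inE !le0x.
rewrite !inE => /eqP xye /eqP ye; apply/eqP.
have xe_y : x ⊓ e ≼ y.
  have : (x ⊓ e) ⊖ y ≼ (x ⊖ y) ⊓ e.
    by apply: lexI; [apply: le_sub2r; apply: leIl | apply: le_trans (le_subl _ _) (leIr _ _)].
  by rewrite xye subx0.
by have := lexI xe_y (leIr x e); rewrite ye subx0.
Qed.

Section SubdirectlyIrreducible.
Hypothesis siA : subdirectly_irreducible sub.

(* The monolith r lies in the polar of x, hence x and then r lie in the polar
   of r, i.e. r = r ⊓ r = 0. *)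
Lemma meet_neq0 x y : x <> z -> y <> z -> x ⊓ y <> z.
Proof.
move=> x0 y0 xy0; have [r r0 rI] := ideal_monolith siA.
have r_x : r \in polar x by apply: rI (polar_ideal x) _; exists y; rewrite // inE meetC xy0.
have r_r : r \in polar r.
  by apply: rI (polar_ideal r) _; exists x; rewrite // inE meetC; rewrite inE in r_x.
by apply: r0; move: r_r; rewrite inE (meet_r (lexx r)) => /eqP.
Qed.

Lemma lower_cover_atom c x : lower_cover c x -> atom (x ⊖ c).
Proof.
case=> cx x_c ccov; split=> [|xc0|v _ v_xc]; first exact: le0x.
  by apply: x_c; apply: le_anti.
have vx : v ≼ x := le_trans v_xc (le_subl x c).
have c_xv : c ≼ x ⊖ v by have := le_sub2l x v_xc; rewrite meet_r.
case: (ccov _ c_xv (le_subl x v)) => [xv_c | xv_x].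
  by right; rewrite -xv_c meet_r.
by left; rewrite -(meet_r vx) xv_x lexx.
Qed.

Lemma atom_uniq a b : atom a -> atom b -> a = b.
Proof.
case=> _ a0 acov [_ b0 bcov].
have ab0 := meet_neq0 a0 b0.
case: (acov _ (le0x _) (leIl a b)) => [//|ab_a].
case: (bcov _ (le0x _) (leIr a b)) => [//|ab_b].
by rewrite -ab_a ab_b.
Qed.

Lemma lower_cover_uniq c1 c2 x : lower_cover c1 x -> lower_cover c2 x -> c1 = c2.
Proof.
move=> cov1 cov2.
have := atom_uniq (lower_cover_atom cov1) (lower_cover_atom cov2).
case: cov1 cov2 => c1x _ _ [c2x _ _] xc12.
by rewrite -(meet_r c1x) xc12 meet_r.
Qed.

(* Both s and t lie below the unique lower cover of x. *)
Lemma downset_chain x s t : s ≼ x -> t ≼ x -> s ≼ t \/ t ≼ s.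
Proof.
have [n] := ubnP (height x); elim: n x => // n IH x; rewrite ltnS => hx sx tx.
have [-> | /eqP s_x] := eqVneq s x; first by right.
have [-> | /eqP t_x] := eqVneq t x; first by left.
have [c cov sc] := exists_lower_cover sx s_x.
have [c' cov' tc] := exists_lower_cover tx t_x.
rewrite (lower_cover_uniq cov' cov) in tc.
case: cov => cx x_c _; apply: IH sc tc; apply: leq_trans _ hx.
by apply: (height_lt cx) => /esym.
Qed.

Definition upset t := [set s | t ⊖ s == z].

Lemma card_downsetI_upset t x : t ≼ x -> #|downset x :&: upset t| = #|downset (x ⊖ t)|.
Proof.
move=> tx.
have -> : downset x :&: upset t = [set x ⊖ s | s in downset (x ⊖ t)].
  apply/setP=> u; rewrite !inE; apply/andP/imsetP => [[/eqP ux /eqP tu] | [s]].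
    by exists (x ⊖ u); [rewrite inE; apply/eqP/le_sub2l | rewrite meet_r].
  rewrite inE => /eqP s_xt ->; split; first by rewrite le_subl.
  by have := le_sub2l x s_xt; rewrite meet_r // => ->.
apply: card_in_imset => s1 s2; rewrite !inE => /eqP s1x /eqP s2x e.
have s1x' := le_trans s1x (le_subl x t); have s2x' := le_trans s2x (le_subl x t).
by rewrite -(meet_r s1x') e meet_r.
Qed.

(* [downset x] is the union of [downset t] and the interval [t, x], which meet
   only in t. *)
Lemma height_sub t x : t ≼ x -> height (x ⊖ t) + height t = height x.
Proof.
move=> tx.
have DU : downset t :|: (downset x :&: upset t) = downset x.
  apply/setP=> s; rewrite !inE; apply/idP/idP => [/orP[/eqP st | /andP[] //] | /eqP sx].
    exact/eqP/(le_trans st tx).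
  by rewrite sx; case: (downset_chain sx tx) => ->; rewrite eqxx ?orbT.
have DI : downset t :&: (downset x :&: upset t) = [set t].
  apply/setP=> s; rewrite !inE; apply/idP/eqP => [/and3P[/eqP st _ /eqP ts] | ->].
    exact: le_anti.
  by rewrite lexx tx eqxx.
have := cardsUI (downset t) (downset x :&: upset t).
rewrite DU DI cards1 card_downsetI_upset // !heightE.
by have := card_downset_gt0 t; have := card_downset_gt0 (x ⊖ t); lia.
Qed.

Section SubuniverseAboveMax.
Variable Y : {set T}.
Hypotheses (subY : forall x y, x \in Y -> y \in Y -> x ⊖ y \in Y)
  (maxY : max_elems sub z \subset Y).
Variable e : T.
Hypotheses (eY : e \in Y) (e0 : e <> z)
  (e_min : forall y, y \in Y -> y <> z -> height e <= height y).

Lemma le_min_nonzero y : y \in Y -> y <> z -> e ≼ y.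
Proof.
move=> yY y0.
have eyY : e ⊓ y \in Y by apply: subY => //; apply: subY.
have ey_e : e ⊓ y = e.
  apply: le_height_eq (leIl e y) _; apply/eqP.
  by rewrite eqn_leq height_le ?leIl //= e_min //; apply: meet_neq0.
by have := leIr e y; rewrite ey_e.
Qed.

Lemma dvdn_height y : y \in Y -> height e %| height y.
Proof.
have [n] := ubnP (height y); elim: n y => // n IH y; rewrite ltnS => hy yY.
have [->|/eqP y0] := eqVneq y z; first by rewrite height0 dvdn0.
have ey := le_min_nonzero yY y0.
rewrite -(height_sub ey) dvdn_addl // IH ?subY //.
by have := height_gt0 e0; rewrite -(height_sub ey) in hy; lia.
Qed.

(* x is comparable with y ⊖ e; if above it, divisibility forces equality. *)
Lemma mem_of_dvdn_height x y : y \in Y -> x ≼ y -> height e %| height x -> x \in Y.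
Proof.
have [n] := ubnP (height y); elim: n y => // n IH y; rewrite ltnS => hy yY xy dx.
have [->|/eqP x_y] := eqVneq x y; first by [].
have y0 : y <> z by move=> y0; have := height_lt xy x_y; rewrite y0 height0.
have ey := le_min_nonzero yY y0; have yeY : y ⊖ e \in Y by apply: subY.
have hye := height_sub ey; have he0 := height_gt0 e0.
case: (downset_chain xy (le_subl y e)) => [x_ye | ye_x].
  by apply: IH yeY x_ye dx; lia.
suff -> : x = y ⊖ e by [].
apply/esym/(le_height_eq ye_x).
apply: dvdn_eq_ltn_add (dvdn_height yeY) dx (height_le ye_x) _.
by rewrite hye; apply: height_lt.
Qed.

Lemma subuniverse_eq : Y = A_k sub z (height e) :|: max_elems sub z.
Proof.
apply/setP=> x; rewrite in_setU inE; apply/idP/orP => [xY | [dx | xm]].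
- by left; apply: dvdn_height.
- have [a am xa] := exists_max_ge x.
  exact: mem_of_dvdn_height (subsetP maxY _ am) xa dx.
- exact: subsetP maxY _ xm.
Qed.

End SubuniverseAboveMax.

Section NonChain.
Hypothesis nchainA : ~ is_chain sub z.

Lemma exists_max_neq a : exists2 b, b \in max_elems sub z & b <> a.
Proof.
have [/existsP[b /andP[bm /eqP ba]] | /existsPn only_a] :=
  boolP [exists b, (b \in max_elems sub z) && (b != a)]; first by exists b.
have le_a w : w ≼ a.
  have [b bm wb] := exists_max_ge w.
  by have := only_a b; rewrite bm negbK => /eqP <-.
case: nchainA => x y; rewrite /bck_le.
by case: (downset_chain (le_a x) (le_a y)) => ->; [left | right].
Qed.

Lemma max_neq0 a : a \in max_elems sub z -> a <> z.
Proof.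
move=> /max_elemsP amax a0; have [b bm] := exists_max_neq a; apply.
by apply: amax; rewrite a0 le0x.
Qed.

Lemma height_sub_max a b : a \in max_elems sub z -> b \in max_elems sub z -> b <> a ->
  0 < height (a ⊖ b) < height a.
Proof.
move=> am bm ba.
have ab0 : a ⊖ b <> z by move=> ab; apply: ba; move/max_elemsP: am; apply.
have := height_sub (leIl a b); rewrite (meet_r (le_subl a b)).
have := height_gt0 (meet_neq0 (max_neq0 am) (max_neq0 bm)).
by have := height_gt0 ab0; lia.
Qed.

Lemma generates_max_S_delta_empty :
  generates sub z (max_elems sub z) -> S_delta_empty sub z.
Proof.
move=> gen X [k [_ k1 _ defX subX]].
have {subX} XT : X = setT by apply: gen => //; rewrite defX subsetUr.
have [a am _] := exists_max_ge z.
have [b bm ba] := exists_max_neq a.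
have [t t_atom tab] := exists_atom_le (meet_neq0 (max_neq0 am) (max_neq0 bm)).
have t_nmax : t \notin max_elems sub z.
  apply/negP=> /max_elemsP tmax; apply: ba.
  by rewrite (tmax b (le_trans tab (leIr a b))) (tmax a (le_trans tab (leIl a b))).
have : t \in X by rewrite XT inE.
by rewrite defX in_setU (negbTE t_nmax) orbF inE (height_atom t_atom) dvdn1 => /eqP.
Qed.

Lemma proper_subuniverse_S_delta Y : subuniverse sub z Y ->
  max_elems sub z \subset Y -> Y != setT -> in_S_delta sub z Y.
Proof.
move=> subY maxY YT; have subYY := subY.2.
have [a am ha] := exists_max_height; have [b bm ba] := exists_max_neq a.
have aY := subsetP maxY a am.
have aP : (a \in Y) && (a != z) by rewrite aY; apply/eqP/max_neq0.
case: (@arg_minnP _ a (fun y => (y \in Y) && (y != z)) height aP).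
move=> e /andP[eY /eqP e0] e_min.
have e_min' y : y \in Y -> y <> z -> height e <= height y.
  by move=> yY y0; apply: e_min; rewrite yY; apply/eqP.
have defY := subuniverse_eq subYY maxY eY e0 e_min'.
have dvdY := dvdn_height subYY maxY eY e0 e_min'.
exists (height e); split=> //.
- by rewrite -ha; apply: dvdY.
- move=> e1; move/eqP: YT; apply; apply/setP=> x.
  by rewrite defY e1 !inE dvd1n.
- rewrite -ha => hea.
  have abY : a ⊖ b \in Y by apply: subYY => //; apply: subsetP maxY b bm.
  have /andP[ab_gt0 ab_lt] := height_sub_max am bm ba.
  by have := dvdn_leq ab_gt0 (dvdY _ abY); lia.
Qed.

Lemma S_delta_empty_generates_max :
  S_delta_empty sub z -> generates sub z (max_elems sub z).
Proof.
move=> none Y subY maxY; apply/eqP; apply: contraT => YT.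
by case: (none Y); apply: proper_subuniverse_S_delta.
Qed.

End NonChain.
End SubdirectlyIrreducible.
End Commutative.
End BCKAlgebra.

Theorem mainTheorem5 (T : finType) (bop : T -> T -> T) (z : T) :
  is_cBCK bop z ->
  subdirectly_irreducible bop ->
  ~ is_chain bop z ->
  (generates bop z (max_elems bop z) <-> S_delta_empty bop z).
Proof.
move=> [bckA commA] siA nchainA; split.
  exact: generates_max_S_delta_empty bckA commA siA nchainA.
exact: S_delta_empty_generates_max bckA commA siA nchainA.
Qed.
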